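(* Under the hypotheses of the striction construction (the ruling distribution of $\sigma$ has degree $d>0$ at every $t$, and $\rho_{t}X_{m-d}(t),\dotsc,\rho_{t}X_{m-1}(t)$ are linearly independent for every $t$), the differential of $\sigma$ has rank exactly $m-1$ at every singular point of $\sigma$.
   Context: Ruled submanifold: given an open interval $I$, a smooth unit-speed curve $\gamma\colon I\to\mathbb{R}^{m+n}$ and smooth vector fields $X_{1},\dotsc,X_{m-1}$ along $\gamma$ that are orthonormal at each $t$, define $\sigma(t,u^{1},\dotsc,u^{m-1})=\gamma(t)+\sum_{j=1}^{m-1}u^{j}X_{j}(t)$ on $I\times\mathbb{R}^{m-1}$. A point is singular if $d\sigma$ is not injective there. The ruling distribution is $\mathcal{D}_{t}=\operatorname{Span}(X_{j}(t))_{j=1}^{m-1}$, and $\rho_{t}X_{j}(t)=\pi^{\perp}\dot X_{j}(t)$, where $\pi^{\perp}$ is orthogonal projection onto $\mathcal{D}_{t}^{\perp}$. The degree of $\mathcal{D}$ at $t$ is the rank of the linear map $\rho_{t}\colon\mathcal{D}_{t}\to\mathcal{D}_{t}^{\perp}$, $\sum_j c_jX_j(t)\mapsto\sum_j c_j\rho_tX_j(t)$. *)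

From HB Require Import structures.
From mathcomp Require Import all_boot all_order all_algebra.
From mathcomp Require Import all_classical all_reals all_analysis.
Set Implicit Arguments. Unset Strict Implicit. Unset Printing Implicit Defensive.
Import Order.TTheory GRing.Theory Num.Theory.
Import numFieldNormedType.Exports.
Local Open Scope classical_set_scope.
Local Open Scope ring_scope.

Section RuledDefs.
Variable R : realType.

Definition dotv N (u v : 'rV[R]_N) : R := (u *m v^T) 0 0.

Definition smooth_on N (I : set R) (f : R -> 'rV[R]_N) : Prop :=
  forall k t, I t -> derivable (derive1n k f) t 1.

Definition unit_speed_on N (I : set R) (g : R -> 'rV[R]_N) : Prop :=
  forall t, I t -> dotv (derive1 g t) (derive1 g t) = 1.

Definition orthonormal_on N k (I : set R) (X : 'I_k -> R -> 'rV[R]_N) : Prop :=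
  forall t, I t -> forall i j, dotv (X i t) (X j t) = (i == j)%:R.

(* sigma(t,u) = gamma(t) + sum_j u^j X_j(t); a point of I x R^(m-1) is the row
   vector (t, u) in 'rV_(1 + (m-1)). *)
Definition ruled_map N k (g : R -> 'rV[R]_N) (X : 'I_k -> R -> 'rV[R]_N)
  (p : 'rV[R]_(1 + k)) : 'rV[R]_N :=
  g (lsubmx p 0 0) + \sum_(j < k) (rsubmx p) 0 j *: X j (lsubmx p 0 0).

Definition proj_perp N k (X : 'I_k -> R -> 'rV[R]_N) (t : R) (v : 'rV[R]_N) :=
  v - \sum_(l < k) dotv v (X l t) *: X l t.

Definition rho N k (X : 'I_k -> R -> 'rV[R]_N) (t : R) (j : 'I_k) : 'rV[R]_N :=
  proj_perp X t (derive1 (X j) t).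

(* degree of D at t: rank of rho_t : D_t -> D_t^perp, i.e. the dimension of the
   span of the images rho_t X_j(t) of the orthonormal basis (X_j(t))_j *)
Definition ruling_degree N k (X : 'I_k -> R -> 'rV[R]_N) (t : R) : nat :=
  \rank (\matrix_(j < k) rho X t j).

End RuledDefs.

From HB Require Import structures.
From mathcomp Require Import all_boot all_order all_algebra.
From mathcomp Require Import all_classical all_reals all_analysis.
Import Order.TTheory GRing.Theory Num.Theory.
Import numFieldNormedType.Exports.
Local Open Scope classical_set_scope.
Local Open Scope ring_scope.

(* Moving along the j-th ruling direction u^j, the map sigma is affine with
   slope X_j(t), so the partial derivatives of sigma in the u-directions are the
   orthonormal vectors X_j(t); hence rank d sigma >= m - 1.  At a singular point
   d sigma is not injective on R^m, so rank d sigma < m. *)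

Lemma mxrank_orthonormal_rows {F : fieldType} {k N} {B : 'M[F]_(k, N)} :
  B *m B^T = 1%:M -> \rank B = k.
Proof.
move=> BBT; apply/eqP; rewrite eqn_leq rank_leq_row /=.
by rewrite -{1}(mxrank1 F k) -BBT mxrankM_maxl.
Qed.

Lemma mxrank_lin1_lt {F : fieldType} {n p} (f : {linear 'rV[F]_n -> 'rV[F]_p}) :
  ~ injective f -> (\rank (lin1_mx f) < n)%N.
Proof.
move=> ninj; rewrite ltn_neqAle rank_leq_row andbT.
apply/negP => /eqP full; apply: ninj => u v.
by rewrite -!mul_rV_lin1; apply: row_free_inj; rewrite /row_free full.
Qed.

Section RuledMap.
Variables (R : realType) (N k : nat).
Variables (g : R -> 'rV[R]_N) (X : 'I_k -> R -> 'rV[R]_N).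

Lemma differentiable_scale_fun M (h : 'rV[R]_M -> R) (f : 'rV[R]_M -> 'rV[R]_N) p :
  differentiable h p -> differentiable f p ->
  differentiable (fun q => h q *: f q) p.
Proof.
move=> dh df.
have -> : (fun q => h q *: f q) =
    \sum_(c < N) (fun q => (h q * f q 0 c) *: (delta_mx 0 c : 'rV[R]_N)).
  rewrite fct_sumE; apply/funext => q.
  rewrite {1}(row_sum_delta (f q)) scaler_sumr; apply: eq_bigr => c _.
  by rewrite scalerA.
apply: differentiable_sum => c.
apply: (differentiableZl (k := fun q => h q * f q 0 c)).
apply: (differentiableM (f := h) (g := fun q => f q 0 c)) => //.
apply: (differentiable_comp (g := fun A : 'rV[R]_N => A 0 c)) => //.
exact: differentiable_coord.
Qed.

Lemma differentiable_ruled_map (p : 'rV[R]_(1 + k)) :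
  differentiable g (lsubmx p 0 0) ->
  (forall j, differentiable (X j) (lsubmx p 0 0)) ->
  differentiable (ruled_map g X) p.
Proof.
move=> dg dX.
have dt : differentiable (fun q : 'rV[R]_(1 + k) => lsubmx q 0 0) p.
  apply: (differentiable_comp (g := fun A : 'rV[R]_1 => A 0 0)).
    exact: differentiable_lsubmx.
  exact: differentiable_coord.
have -> : ruled_map g X = (g \o (fun q : 'rV[R]_(1 + k) => lsubmx q 0 0)) +
    \sum_(j < k) (fun q => rsubmx q 0 j *: X j (lsubmx q 0 0)).
  by rewrite fct_sumE; apply/funext.
apply: differentiableD; first exact: differentiable_comp.
apply: differentiable_sum => j; apply: differentiable_scale_fun.
  apply: (differentiable_comp (g := fun A : 'rV[R]_k => A 0 j)).
    exact: differentiable_rsubmx.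
  exact: differentiable_coord.
exact: (differentiable_comp (f := fun q : 'rV[R]_(1 + k) => lsubmx q 0 0)).
Qed.

Lemma ruled_map_shift_rshift (p : 'rV[R]_(1 + k)) (j : 'I_k) (h : R) :
  ruled_map g X (h *: delta_mx 0 (rshift 1 j) + p) =
  ruled_map g X p + h *: X j (lsubmx p 0 0).
Proof.
have lsub : lsubmx (h *: delta_mx 0 (rshift 1 j) + p) = lsubmx p.
  apply/matrixP => a b; rewrite !mxE.
  rewrite (_ : lshift k b == rshift 1 j = false) ?andbF ?mulr0 ?add0r //.
  by apply/negbTE/eqP => /(congr1 val) /=; rewrite ord1.
rewrite /ruled_map lsub -addrA; congr (_ + _).
set t := lsubmx p 0 0.
rewrite (bigD1 j) //= [in RHS](bigD1 j) //= addrAC; congr (_ + _).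
  by rewrite !mxE !eqxx /= mulr1 scalerDl addrC.
apply: eq_bigr => i ij; rewrite !mxE.
rewrite (_ : rshift 1 i == rshift 1 j = false) ?andbF ?mulr0 ?add0r //.
by apply/negbTE; apply: contra ij => /eqP /rshift_inj ->.
Qed.

Lemma derive_ruled_map_rshift (p : 'rV[R]_(1 + k)) (j : 'I_k) :
  'D_(delta_mx 0 (rshift 1 j)) (ruled_map g X) p = X j (lsubmx p 0 0).
Proof.
rewrite /derive; apply: cvg_lim => //.
apply: cvg_near_cst; near=> h.
rewrite /= /shift ruled_map_shift_rshift addrAC subrr add0r scalerA.
by rewrite mulVf ?scale1r //; near: h; exact: nbhs_dnbhs_neq.
Unshelve. all: by end_near.
Qed.

Lemma rank_diff_ruled_map_ge (p : 'rV[R]_(1 + k)) :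
  differentiable (ruled_map g X) p ->
  (forall i j, dotv (X i (lsubmx p 0 0)) (X j (lsubmx p 0 0)) = (i == j)%:R) ->
  (k <= \rank (lin1_mx ('d (ruled_map g X) p)))%N.
Proof.
move=> dF onX; set A := lin1_mx _.
pose B := \matrix_(j < k) X j (lsubmx p 0 0).
have BA : B = rowsub (@rshift 1 k) A.
  apply/matrixP => i c.
  by rewrite !mxE -deriveE // derive_ruled_map_rshift !mxE.
have BBT : B *m B^T = 1%:M.
  apply/matrixP => i j; rewrite !mxE -onX /dotv !mxE.
  by apply: eq_bigr => c _; rewrite !mxE.
by rewrite -{1}(mxrank_orthonormal_rows BBT) BA rowsubE mxrankM_maxr.
Qed.

End RuledMap.

Theorem mainTheorem5 (R : realType) (m n d : nat) (I : set R)
  (gam : R -> 'rV[R]_(m + n)) (X : 'I_(m - 1) -> R -> 'rV[R]_(m + n)) :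
  open I -> is_interval I ->
  smooth_on I gam -> unit_speed_on I gam ->
  (forall j, smooth_on I (X j)) -> orthonormal_on I X ->
  (0 < d)%N ->
  (forall t, I t -> ruling_degree X t = d) ->
  (forall t, I t -> forall c : 'I_(m - 1) -> R,
      (forall j : 'I_(m - 1), (j < m - 1 - d)%N -> c j = 0) ->
      \sum_(j < m - 1) c j *: rho X t j = 0 -> forall j, c j = 0) ->
  forall p : 'rV[R]_(1 + (m - 1)), I (lsubmx p 0 0) ->
    ~ injective ('d (ruled_map gam X) p) ->
    \rank (lin1_mx ('d (ruled_map gam X) p)) = (m - 1)%N.
Proof.
move=> _ _ smooth_gam _ smooth_X onX _ _ _ p Ip singular.
have dF : differentiable (ruled_map gam X) p.
  apply: differentiable_ruled_map => [|j]; apply/derivable1_diffP.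
    exact: (smooth_gam 0%N _ Ip).
  exact: (smooth_X j 0%N _ Ip).
apply/eqP; rewrite eqn_leq rank_diff_ruled_map_ge ?andbT //; last exact: onX.
by rewrite -ltnS -add1n mxrank_lin1_lt.
Qed.
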